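(* Let $a,b\in GF(q)\setminus\{0\}$ with $a\neq b$. If $b/a$ is a square in $GF(q)$, then $\mathcal B_a$ and $\mathcal B_b$ have exactly $2(q+1)$ common tangent circles; all of them are of the first type, and every common tangent circle $\mathcal B^1_{(s,c)}$ satisfies $$\left(\frac{c-b-s\bar s}{c-a-s\bar s}\right)^2=\frac ba .$$ If $b/a$ is a non-square in $GF(q)$, then $\mathcal B_a$ and $\mathcal B_b$ have no common tangent circle.
   Context: Let $p$ be an odd prime, $m\ge1$, and $q=p^m$. $GF(q^2)$ denotes the quadratic extension of $GF(q)$, and for $z\in GF(q^2)$ we write $\bar z:=z^{q}$. The Miquelian Möbius plane $\mathbb M(q)$ has point set $GF(q^2)\cup\{\infty\}$ and circles of two types: for $s\in GF(q^2)$ and $c\in GF(q)\setminus\{0\}$, the circle of the first type $\mathcal B^1_{(s,c)}=\{z\in GF(q^2):(z-s)(\bar z-\bar s)=c\}$; for $s\in GF(q^2)\setminus\{0\}$ and $c\in GF(q)$, the circle of the second type $\mathcal B^2_{(s,c)}=\{z\in GF(q^2):\bar s z+s\bar z=c\}\cup\{\infty\}$. Two circles are called tangential if they have exactly one point in common. For $a\in GF(q)\setminus\{0\}$ put $\mathcal B_a:=\mathcal B^1_{(0,a)}$. A common tangent circle of two circles is a circle tangential to both. *)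

From HB Require Import structures.
From mathcomp Require Import all_boot all_order all_algebra all_field.
Set Implicit Arguments. Unset Strict Implicit. Unset Printing Implicit Defensive.
Import GRing.Theory.
Local Open Scope ring_scope.

(* F plays the role of GF(q^2) (any finite field with q^2 elements);
   points of the Miquelian Moebius plane M(q) are [option F], with
   [None] standing for the point infinity. *)

Definition conjq (F : finFieldType) (q : nat) (z : F) : F := z ^+ q.

Definition inGFq (F : finFieldType) (q : nat) (x : F) : bool := x ^+ q == x.

Definition circle1 (F : finFieldType) (q : nat) (s c : F) : {set option F} :=
  [set z | if z is Some w then (w - s) * (conjq q w - conjq q s) == c else false].

Definition circle2 (F : finFieldType) (q : nat) (s c : F) : {set option F} :=
  [set z | if z is Some w then conjq q s * w + s * conjq q w == c else true].

Definition is_circle1 (F : finFieldType) (q : nat) (C : {set option F}) : bool :=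
  [exists s : F, exists c : F, [&& inGFq q c, c != 0 & C == circle1 q s c]].

Definition is_circle2 (F : finFieldType) (q : nat) (C : {set option F}) : bool :=
  [exists s : F, exists c : F, [&& s != 0, inGFq q c & C == circle2 q s c]].

Definition is_circle (F : finFieldType) (q : nat) (C : {set option F}) : bool :=
  is_circle1 q C || is_circle2 q C.

Definition tangential (F : finFieldType) (C D : {set option F}) : bool :=
  #|C :&: D| == 1%N.

Definition Bcirc (F : finFieldType) (q : nat) (a : F) : {set option F} :=
  circle1 q 0 a.

Definition common_tangent (F : finFieldType) (q : nat) (C D E : {set option F}) : bool :=
  [&& is_circle q E, tangential E C & tangential E D].

From HB Require Import structures.
From mathcomp Require Import all_boot all_order all_algebra all_field.
From mathcomp Require Import ring zify.
Set Implicit Arguments. Unset Strict Implicit. Unset Printing Implicit Defensive.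
Import GRing.Theory.
Local Open Scope ring_scope.

(* Write N s := s * s^q for the norm onto GF(q).  A circle B^1_(s,c) touches
   B_a exactly when s != 0 and (a + N s - c)^2 = 4 a N s: the reflection
   w |-> w^q s / s^q preserves B_a and B^1_(s,c), so their unique common point
   is fixed by it; conversely the condition makes the common point a double
   one.  A circle B^2_(s,c) touching B_a forces c^2 = 4 a N s, so it cannot
   touch both B_a and B_b.  Eliminating c from the two tangency conditions
   gives c = (a + b)/2 - N s and (4 N s - a - b)^2 = 4 a b; for b = a y^2 this
   says N s = a (1 +- y)^2 / 4, while a common tangent always yields a square
   root of b/a in GF(q).  The norm takes each nonzero value of GF(q) exactly
   q + 1 times (its fibres have at most q + 1 points, as roots of
   X^(q+1) - n, and cover the q^2 - 1 units), and a circle of nonzero radius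
   determines its centre, whence the 2 (q + 1) common tangents. *)

Lemma card_roots_lt_size (R : finIdomainType) (P : {poly R}) :
  P != 0 -> (#|[set x | root P x]| < size P)%N.
Proof.
move=> P0; rewrite cardE; apply: max_poly_roots P0 _ (enum_uniq _).
by apply/allP => x; rewrite mem_enum inE.
Qed.

Lemma sum_saturated (I : finType) (A : {pred I}) (f : I -> nat) k :
  (forall i, i \in A -> f i <= k)%N -> (#|A| * k <= \sum_(i in A) f i)%N ->
  forall i, i \in A -> f i = k.
Proof.
move=> le_fk le_sum i Ai; apply/eqP; rewrite eqn_leq le_fk //=.
have : (\sum_(j in A) (k - f j) == 0)%N.
  by rewrite sumnB // sum_nat_const subn_eq0.
by rewrite sum_nat_eq0 => /forall_inP/(_ i Ai); rewrite subn_eq0.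
Qed.

Lemma natf4_neq0 (K : fieldType) : (2%:R : K) != 0 -> (4%:R : K) != 0.
Proof. by move=> two_neq0; rewrite -[4%N]/(2 * 2)%N natrM mulf_neq0. Qed.

Ltac field_nz := field; rewrite ?natf4_neq0 //; by repeat (apply/andP; split).

Section TangencyAlgebra.

Variables (K : fieldType) (a b n : K).
Hypothesis two_neq0 : (2%:R : K) != 0.

Lemma tangency_conditions_elim c : a != b ->
  (a + n - c) ^+ 2 = 4%:R * a * n -> (b + n - c) ^+ 2 = 4%:R * b * n ->
  c = (a + b) / 2%:R - n /\ (4%:R * n - a - b) ^+ 2 = 4%:R * a * b.
Proof.
move=> ab ea eb.
have : (b - a) * (a + b - 2%:R * n - 2%:R * c) = 0.
  have -> : (b - a) * (a + b - 2%:R * n - 2%:R * c) =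
    (b + n - c) ^+ 2 - (a + n - c) ^+ 2 - (4%:R * b * n - 4%:R * a * n) by ring.
  by rewrite ea eb subrr.
move/eqP; rewrite mulf_eq0 subr_eq0 eq_sym (negbTE ab) /= => /eqP e.
have ec : c = (a + b) / 2%:R - n.
  apply/subr0_eq; have -> : c - ((a + b) / 2%:R - n) = - (a + b - 2%:R * n - 2%:R * c) / 2%:R.
    by field_nz.
  by rewrite e oppr0 mul0r.
split=> //; apply/eqP; rewrite -subr_eq0.
have -> : (4%:R * n - a - b) ^+ 2 - 4%:R * a * b = 4%:R * ((a + n - c) ^+ 2 - 4%:R * a * n).
  by rewrite ec; field_nz.
by rewrite ea subrr mulr0.
Qed.

Lemma tangency_conditions_of c : c = (a + b) / 2%:R - n ->
  (4%:R * n - a - b) ^+ 2 = 4%:R * a * b ->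
  (a + n - c) ^+ 2 = 4%:R * a * n /\ (b + n - c) ^+ 2 = 4%:R * b * n.
Proof.
move=> -> e; split; apply/eqP; rewrite -subr_eq0.
  have -> : (a + n - ((a + b) / 2%:R - n)) ^+ 2 - 4%:R * a * n =
    ((4%:R * n - a - b) ^+ 2 - 4%:R * a * b) / 4%:R by field_nz.
  by rewrite e subrr mul0r.
have -> : (b + n - ((a + b) / 2%:R - n)) ^+ 2 - 4%:R * b * n =
  ((4%:R * n - a - b) ^+ 2 - 4%:R * a * b) / 4%:R by field_nz.
by rewrite e subrr mul0r.
Qed.

Lemma tangency_norm_radius_neq0 : a != b ->
  (4%:R * n - a - b) ^+ 2 = 4%:R * a * b -> n != 0 /\ (a + b) / 2%:R - n != 0.
Proof.
move=> ab e; have : (a - b) ^+ 2 != 0 by rewrite expf_neq0 // subr_eq0.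
have -> : (a - b) ^+ 2 = 16%:R * n * ((a + b) / 2%:R - n).
  by apply/subr0_eq; rewrite -(subrr (4%:R * a * b)) -{1}e; field_nz.
by rewrite !mulf_eq0 !negb_or => /andP[/andP[_ ->] ->].
Qed.

Lemma tangency_quadraticE y : b = a * y ^+ 2 ->
  ((4%:R * n - a - b) ^+ 2 == 4%:R * a * b) =
  (n == a * (1 + y) ^+ 2 / 4%:R) || (n == a * (1 - y) ^+ 2 / 4%:R).
Proof.
have four_neq0 := natf4_neq0 two_neq0.
move=> ->; have -> : 4%:R * a * (a * y ^+ 2) = (2%:R * a * y) ^+ 2 by ring.
rewrite eqf_sqr -addr_eq0 -subr_eq0 -[n == _]subr_eq0 -[n == a * (1 - y) ^+ 2 / _]subr_eq0.
have -> : 4%:R * n - a - a * y ^+ 2 - 2%:R * a * y = 4%:R * (n - a * (1 + y) ^+ 2 / 4%:R).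
  by field_nz.
have -> : 4%:R * n - a - a * y ^+ 2 + 2%:R * a * y = 4%:R * (n - a * (1 - y) ^+ 2 / 4%:R).
  by field_nz.
by rewrite !mulf_eq0 (negbTE four_neq0).
Qed.

End TangencyAlgebra.

Section Conjugation.

Variables (F : finFieldType) (q : nat).
Hypothesis conjqD : forall x y : F, conjq q (x + y) = conjq q x + conjq q y.
Hypothesis card_F : #|F| = (q * q)%N.
Hypothesis q_gt1 : (1 < q)%N.

Local Notation cj := (conjq q).
Local Notation nrm s := (s * conjq q s).

Lemma inGFqE (x : F) : inGFq q x = (cj x == x).
Proof. by []. Qed.

Lemma conjq_GFq (x : F) : inGFq q x -> cj x = x.
Proof. exact: eqP. Qed.

Lemma conjq0 : cj (0 : F) = 0.
Proof. by rewrite /conjq expr0n eqn0Ngt (ltnW q_gt1). Qed.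

Lemma conjq1 : cj (1 : F) = 1.
Proof. by rewrite /conjq expr1n. Qed.

Lemma conjqN (x : F) : cj (- x) = - cj x.
Proof. by apply/eqP; rewrite -subr_eq0 opprK -conjqD addNr conjq0. Qed.

Lemma conjqB (x y : F) : cj (x - y) = cj x - cj y.
Proof. by rewrite conjqD conjqN. Qed.

Lemma conjqM (x y : F) : cj (x * y) = cj x * cj y.
Proof. by rewrite /conjq exprMn. Qed.

Lemma conjqV (x : F) : cj x^-1 = (cj x)^-1.
Proof. by rewrite /conjq exprVn. Qed.

Lemma conjqX (x : F) k : cj (x ^+ k) = cj x ^+ k.
Proof. by rewrite /conjq -!exprM mulnC. Qed.

Lemma conjq_nat k : cj (k%:R : F) = k%:R.
Proof. by elim: k => [|k IHk]; rewrite ?conjq0 // -addn1 natrD conjqD IHk conjq1. Qed.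

Lemma conjqK (x : F) : cj (cj x) = x.
Proof. by rewrite /conjq -exprM -card_F expf_card. Qed.

Lemma conjq_eq0 (x : F) : (cj x == 0) = (x == 0).
Proof. by rewrite /conjq expf_eq0 (ltnW q_gt1). Qed.

Lemma conjq_norm (s : F) : cj (nrm s) = nrm s.
Proof. by rewrite conjqM conjqK mulrC. Qed.

Lemma norm_opp (s : F) : nrm (- s) = nrm s.
Proof. by rewrite conjqN mulrNN. Qed.

Lemma norm_neq0 (s : F) : s != 0 -> nrm s != 0.
Proof. by move=> s0; rewrite mulf_neq0 ?conjq_eq0. Qed.

Definition norm_fiber (n : F) : {set F} := [set z | nrm z == n].

Lemma card_norm_fiber_le n : (#|norm_fiber n| <= q.+1)%N.
Proof.
have P0 : ('X^(q.+1) - n%:P : {poly F}) != 0 by rewrite -size_poly_eq0 size_XnsubC.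
rewrite -ltnS -(size_XnsubC n (ltn0Sn q)); apply: leq_ltn_trans (card_roots_lt_size P0).
apply: subset_leq_card; apply/subsetP => x; rewrite !inE => /eqP nx.
by rewrite rootE !hornerE subr_eq0 exprS -nx.
Qed.

Definition GFq_units : {set F} := [set x | inGFq q x & x != 0].

Lemma card_GFq_units : (#|GFq_units| <= q.-1)%N.
Proof.
have q1_gt0 : (0 < q.-1)%N by rewrite -subn1 subn_gt0.
have P0 : ('X^(q.-1) - 1%:P : {poly F}) != 0 by rewrite -size_poly_eq0 size_XnsubC.
rewrite -ltnS -(size_XnsubC (1 : F) q1_gt0); apply: leq_ltn_trans (card_roots_lt_size P0).
apply: subset_leq_card; apply/subsetP => x; rewrite !inE => /andP[/eqP xq x0].
rewrite rootE !hornerE subr_eq0; apply/eqP/(mulIf x0).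
by rewrite mul1r -exprSr prednK ?(ltnW q_gt1).
Qed.

Lemma card_norm_fiber n : inGFq q n -> n != 0 -> #|norm_fiber n| = q.+1.
Proof.
move=> nGF n0.
apply: (@sum_saturated _ (mem GFq_units) (fun n => #|norm_fiber n|)).
- by move=> m _; apply: card_norm_fiber_le.
- have <- : #|[set~ (0 : F)]| = \sum_(m in GFq_units) #|norm_fiber m|.
    rewrite -sum1_card (partition_big (fun z => nrm z) (mem GFq_units)) /=; last first.
      by move=> z; rewrite !inE => z0; rewrite inGFqE conjq_norm eqxx norm_neq0.
    apply: eq_bigr => m; rewrite inE => /andP[_ m0].
    rewrite sum1dep_card; apply: eq_card => z; rewrite !inE.
    by case: eqVneq => [->|] //=; rewrite mul0r eq_sym (negbTE m0).
  rewrite cardsC1 card_F; apply: leq_trans (leq_mul card_GFq_units (leqnn q.+1)) _.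
  by have := q_gt1; nia.
- by rewrite inE nGF.
Qed.

Lemma circle1_center_inj (s s' c c' : F) :
  inGFq q c -> c != 0 -> circle1 q s c = circle1 q s' c' -> s = s'.
Proof.
move=> cGF c0; have [d ->] : exists d, s' = s + d by exists (s' - s); rewrite addrC subrK.
move=> eq_circ; suff /eqP -> : d == 0 by rewrite addr0.
apply: contraT => d0.
(* every z of norm c makes z * d^q a root of P, but there are q + 1 > 2 such z *)
have cd0 : cj d != 0 by rewrite conjq_eq0.
pose k := c + nrm d - c'.
pose P : {poly F} := ('X - k%:P) * 'X + (c * nrm d)%:P.
have size_P : size P = 3%N.
  rewrite /P size_MXaddC size_XsubC; case: ifP => // /andP[/eqP P0 _].
  by move: (size_XsubC k); rewrite P0 size_poly0.
have P0 : P != 0 by rewrite -size_poly_eq0 size_P.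
suff : (#|[set (z * cj d)%R | z in norm_fiber c]| <= #|[set x | root P x]|)%N.
  rewrite card_imset ?card_norm_fiber //; last exact: mulIf.
  by rewrite leqNgt (leq_trans (card_roots_lt_size P0)) // size_P.
apply: subset_leq_card; apply/subsetP => x /imsetP[z]; rewrite inE => /eqP zc ->.
have : Some (z + s) \in circle1 q s c by rewrite inE /= addrK conjqD addrK zc.
rewrite eq_circ inE /= !conjqD => /eqP zc'.
rewrite inE rootE /P hornerD hornerMX hornerXsubC hornerC /k -zc' -zc.
by apply/eqP; ring.
Qed.

Lemma tangent_point (C : {set option F}) a :
  tangential C (Bcirc q a) -> exists w, C :&: Bcirc q a = [set Some w].
Proof.
move=> /cards1P[[w|] Cw]; first by exists w.
by have := set11 (None : option F); rewrite -Cw !inE andbF.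
Qed.

Lemma tangent_point_fixed (C : {set option F}) a (f : F -> F) :
  tangential C (Bcirc q a) -> (forall w, nrm (f w) = nrm w) ->
  (forall w, Some w \in C -> Some (f w) \in C) ->
  exists2 w, Some w \in C & nrm w = a /\ f w = w.
Proof.
move=> /tangent_point[w Cw] f_nrm f_C.
have : Some w \in C :&: Bcirc q a by rewrite Cw set11.
rewrite inE => /andP[wC]; rewrite inE /= conjq0 !subr0 => /eqP wa.
exists w => //; split=> //.
have : Some (f w) \in C :&: Bcirc q a by rewrite inE f_C //= inE /= conjq0 !subr0 f_nrm wa.
by rewrite Cw => /set1P[].
Qed.

Definition mirror (s w : F) : F := cj w * s / cj s.

Lemma conjq_mirror s w : cj (mirror s w) = w * cj s / s.
Proof. by rewrite !conjqM conjqV !conjqK. Qed.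

Lemma norm_mirror s : s != 0 -> forall w, nrm (mirror s w) = nrm w.
Proof.
move=> s0 w; have cs0 : cj s != 0 by rewrite conjq_eq0.
by rewrite conjq_mirror /mirror; field_nz.
Qed.

Lemma mirror_circle1 s c : s != 0 -> forall w,
  Some w \in circle1 q s c -> Some (mirror s w) \in circle1 q s c.
Proof.
move=> s0 w; have cs0 : cj s != 0 by rewrite conjq_eq0.
rewrite !inE /= conjq_mirror /mirror => /eqP <-; apply/eqP.
by field_nz.
Qed.

Lemma mirror_circle2 s c : s != 0 -> forall w,
  Some w \in circle2 q s c -> Some (mirror s w) \in circle2 q s c.
Proof.
move=> s0 w; have cs0 : cj s != 0 by rewrite conjq_eq0.
rewrite !inE /= conjq_mirror /mirror => /eqP <-; apply/eqP.
by field_nz.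
Qed.

Lemma mirror_fixed s w : mirror s w = w -> cj w = w * cj s / s.
Proof. by move=> fix_w; rewrite -{1}fix_w conjq_mirror. Qed.

Hypothesis two_neq0 : (2%:R : F) != 0.

Lemma tangential_circle1_Bcirc (s c a : F) : a != 0 ->
  tangential (circle1 q s c) (Bcirc q a) ->
  s != 0 /\ (a + nrm s - c) ^+ 2 = 4%:R * a * nrm s.
Proof.
move=> a0 tang; have [s0|s0] := eqVneq s 0.
  have neg_C w : Some w \in circle1 q s c -> Some (- w) \in circle1 q s c.
    by rewrite s0 !inE /= conjqN conjq0 !subr0 mulrNN.
  have [w _ [wa wN]] := tangent_point_fixed tang norm_opp neg_C.
  have : 2%:R * w = 0 by rewrite mulr_natl mulr2n -{1}wN addNr.
  move/eqP; rewrite mulf_eq0 (negbTE two_neq0) /= => /eqP w0.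
  by move: a0; rewrite -wa w0 mul0r eqxx.
have [w] := tangent_point_fixed tang (norm_mirror s0) (mirror_circle1 (c := c) s0).
rewrite inE /= => /eqP wc [wa /mirror_fixed cj_w]; split=> //.
by rewrite -wc -wa cj_w; field_nz.
Qed.

Lemma tangential_circle2_Bcirc (s c a : F) : s != 0 ->
  tangential (circle2 q s c) (Bcirc q a) -> c ^+ 2 = 4%:R * a * nrm s.
Proof.
move=> s0 tang.
have [w] := tangent_point_fixed tang (norm_mirror s0) (mirror_circle2 (c := c) s0).
rewrite inE /= => /eqP wc [wa /mirror_fixed cj_w].
by rewrite -wc -wa cj_w; field_nz.
Qed.

Lemma tangential_circle1_Bcirc_of (s c a : F) : s != 0 -> inGFq q a -> inGFq q c ->
  (a + nrm s - c) ^+ 2 = 4%:R * a * nrm s -> tangential (circle1 q s c) (Bcirc q a).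
Proof.
move=> s0 /conjq_GFq ca /conjq_GFq cc; set k := a + nrm s - c => k2.
have cs0 : cj s != 0 by rewrite conjq_eq0.
have ck : cj k = k by rewrite conjqB conjqD conjq_norm ca cc.
apply/cards1P; exists (Some (k / (2%:R * cj s))).
apply/setP => -[w|]; rewrite !inE //= conjq0 !subr0.
apply/andP/eqP => [[/eqP wc /eqP wa]|[->]].
  have : (w * cj s - k / 2%:R) ^+ 2 = 0.
    have -> : (w * cj s - k / 2%:R) ^+ 2 = (w * cj s) ^+ 2 - k * (w * cj s) + k ^+ 2 / 4%:R.
      by field_nz.
    by rewrite k2 /k -wc -wa; field_nz.
  move/eqP; rewrite expf_eq0 /= subr_eq0 => /eqP wcs.
  by congr Some; rewrite -(mulfK cs0 w) wcs; field_nz.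
have cj_w : cj (k / (2%:R * cj s)) = k / (2%:R * s).
  by rewrite conjqM conjqV conjqM conjqK conjq_nat ck.
have nrm_w : k / (2%:R * cj s) * (k / (2%:R * s)) = a.
  have -> : k / (2%:R * cj s) * (k / (2%:R * s)) = k ^+ 2 / (4%:R * nrm s) by field_nz.
  by rewrite k2; field_nz.
rewrite cj_w nrm_w; split=> //; apply/eqP.
have -> : (k / (2%:R * cj s) - s) * (k / (2%:R * s) - cj s) = a - k + nrm s.
  by rewrite -nrm_w; field_nz.
by rewrite /k; ring.
Qed.

Section CommonTangents.

Variables a b : F.
Hypotheses (aGF : inGFq q a) (bGF : inGFq q b) (a0 : a != 0) (b0 : b != 0) (ab : a != b).

Local Notation tangent E := (common_tangent q (Bcirc q a) (Bcirc q b) E).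

Lemma common_tangent_circle1P s c : inGFq q c ->
  tangent (circle1 q s c) <->
  c = (a + b) / 2%:R - nrm s /\ (4%:R * nrm s - a - b) ^+ 2 = 4%:R * a * b.
Proof.
move=> cGF; split.
  case/and3P=> _ /(tangential_circle1_Bcirc a0)[_ ea] /(tangential_circle1_Bcirc b0)[_ eb].
  exact: tangency_conditions_elim.
move=> [ec e]; have [n0 c0] := tangency_norm_radius_neq0 two_neq0 ab e.
have s0 : s != 0 by apply: contra_neq n0 => ->; rewrite mul0r.
have [ea eb] := tangency_conditions_of two_neq0 ec e.
apply/and3P; split; try exact: tangential_circle1_Bcirc_of.
apply/orP; left; apply/existsP; exists s; apply/existsP; exists c.
by rewrite cGF ec c0 eqxx.
Qed.

Lemma common_tangent_is_circle1 E : tangent E -> is_circle1 q E.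
Proof.
case/and3P=> /orP[//|/existsP[s /existsP[c /and3P[s0 _ /eqP ->]]]] ta tb.
have ea := tangential_circle2_Bcirc s0 ta; have eb := tangential_circle2_Bcirc s0 tb.
case/eqP: ab; apply: (mulIf (norm_neq0 s0)); apply: (mulfI (natf4_neq0 two_neq0)).
by rewrite mulrA -ea mulrA -eb.
Qed.

Lemma common_tangent_ratio s c : inGFq q c -> tangent (circle1 q s c) ->
  ((c - b - nrm s) / (c - a - nrm s)) ^+ 2 = b / a.
Proof.
move=> cGF /and3P[_ /(tangential_circle1_Bcirc a0)[s0 ea] /(tangential_circle1_Bcirc b0)[_ eb]].
have cs0 : cj s != 0 by rewrite conjq_eq0.
rewrite expr_div_n.
have -> : (c - b - nrm s) ^+ 2 = (b + nrm s - c) ^+ 2 by ring.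
have -> : (c - a - nrm s) ^+ 2 = (a + nrm s - c) ^+ 2 by ring.
by rewrite ea eb; field_nz.
Qed.

Lemma inGFq_radius s : inGFq q ((a + b) / 2%:R - nrm s).
Proof.
rewrite inGFqE conjqB conjqM conjqV conjqD conjq_nat conjq_norm.
by rewrite (conjq_GFq aGF) (conjq_GFq bGF).
Qed.

Lemma common_tangent_square E : tangent E -> exists2 y, inGFq q y & y ^+ 2 = b / a.
Proof.
move=> tE; have /existsP[s /existsP[c /and3P[cGF _ /eqP defE]]] := common_tangent_is_circle1 tE.
rewrite defE in tE; exists ((c - b - nrm s) / (c - a - nrm s)); last exact: common_tangent_ratio.
rewrite inGFqE conjqM conjqV !conjqB conjq_norm.
by rewrite (conjq_GFq aGF) (conjq_GFq bGF) (conjq_GFq cGF).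
Qed.

Definition tangent_centres (y : F) : {set F} :=
  norm_fiber (a * (1 + y) ^+ 2 / 4%:R) :|: norm_fiber (a * (1 - y) ^+ 2 / 4%:R).

Lemma mem_tangent_centres y s : b = a * y ^+ 2 ->
  (s \in tangent_centres y) = ((4%:R * nrm s - a - b) ^+ 2 == 4%:R * a * b).
Proof. by move=> b_ay2; rewrite !inE -(tangency_quadraticE _ two_neq0 b_ay2). Qed.

Lemma common_tangentsE y : b = a * y ^+ 2 ->
  [set E | tangent E] = [set circle1 q s ((a + b) / 2%:R - nrm s) | s in tangent_centres y].
Proof.
move=> b_ay2; apply/setP => E; rewrite inE; apply/idP/imsetP => [tE|[s]].
  have /existsP[s /existsP[c /and3P[cGF _ /eqP defE]]] := common_tangent_is_circle1 tE.
  move: tE; rewrite defE => /(common_tangent_circle1P _ cGF)[-> /eqP e].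
  by exists s; rewrite // mem_tangent_centres.
rewrite mem_tangent_centres // => /eqP e ->.
exact/(common_tangent_circle1P _ (inGFq_radius s)).
Qed.

Lemma card_tangent_centres y : inGFq q y -> b = a * y ^+ 2 ->
  #|tangent_centres y| = (2 * (q + 1))%N.
Proof.
move=> yGF b_ay2; have : (1 - y) * (1 + y) != 0.
  rewrite -subr_sqr expr1n subr_eq0 eq_sym.
  by apply: contra_neq ab => y21; rewrite b_ay2 y21 mulr1.
rewrite mulf_eq0 negb_or => /andP[ym yp].
have y0 : y != 0 by apply: contra_neq b0 => y0; rewrite b_ay2 y0 expr0n /= mulr0.
have GFq_n e : inGFq q e -> inGFq q (a * (1 + e) ^+ 2 / 4%:R).
  move=> eGF; rewrite inGFqE conjqM conjqV conjqM conjqX conjqD conjq1 conjq_nat.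
  by rewrite (conjq_GFq aGF) (conjq_GFq eGF).
have n_neq0 e : 1 + e != 0 -> a * (1 + e) ^+ 2 / 4%:R != 0.
  by move=> e0; rewrite !mulf_neq0 ?expf_neq0 ?invr_neq0 ?natf4_neq0.
have nyGF : inGFq q (- y) by rewrite inGFqE conjqN (conjq_GFq yGF).
have n12 : a * (1 + y) ^+ 2 / 4%:R != a * (1 - y) ^+ 2 / 4%:R.
  rewrite -subr_eq0 (_ : _ - _ = a * y) ?mulf_neq0 //; field_nz.
rewrite cardsU (_ : _ :&: _ = set0); last first.
  by apply/setP => z; rewrite !inE; apply: contraNF n12 => /andP[/eqP <- /eqP ->].
rewrite cards0 subn0 !card_norm_fiber ?GFq_n ?n_neq0 //.
by rewrite addn1 mul2n addnn.
Qed.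

Lemma card_common_tangents y : inGFq q y -> y ^+ 2 = b / a ->
  #|[set E | tangent E]| = (2 * (q + 1))%N.
Proof.
move=> yGF y2; have b_ay2 : b = a * y ^+ 2 by rewrite y2 mulrC divfK.
rewrite (common_tangentsE b_ay2) card_in_imset ?card_tangent_centres //.
move=> s s'; rewrite (mem_tangent_centres s b_ay2) => /eqP e _.
apply: circle1_center_inj (inGFq_radius s) _.
by have [] := tangency_norm_radius_neq0 two_neq0 ab e.
Qed.

End CommonTangents.

End Conjugation.

Theorem mainTheorem2 (p m : nat) (F : finFieldType) (a b : F) :
  prime p -> odd p -> (0 < m)%N -> #|F| = ((p ^ m) ^ 2)%N ->
  inGFq (p ^ m) a -> inGFq (p ^ m) b -> a != 0 -> b != 0 -> a != b ->
  ((exists2 y : F, inGFq (p ^ m) y & y ^+ 2 = b / a) ->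
     [/\ #|[set E | common_tangent (p ^ m) (Bcirc (p ^ m) a) (Bcirc (p ^ m) b) E]|
           = (2 * (p ^ m + 1))%N,
         (forall E, common_tangent (p ^ m) (Bcirc (p ^ m) a) (Bcirc (p ^ m) b) E ->
                    is_circle1 (p ^ m) E) &
         (forall s c : F, inGFq (p ^ m) c -> c != 0 ->
            common_tangent (p ^ m) (Bcirc (p ^ m) a) (Bcirc (p ^ m) b)
              (circle1 (p ^ m) s c) ->
            ((c - b - s * conjq (p ^ m) s) / (c - a - s * conjq (p ^ m) s)) ^+ 2
              = b / a)]) /\
  (~ (exists2 y : F, inGFq (p ^ m) y & y ^+ 2 = b / a) ->
     forall E, ~~ common_tangent (p ^ m) (Bcirc (p ^ m) a) (Bcirc (p ^ m) b) E).
Proof.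
move=> p_pr p_odd m_gt0 card_F aGF bGF a0 b0 ab.
have pF : p \in [pchar F] by apply: (@card_finPcharP _ _ (m * 2)); rewrite // card_F expnM.
have conjqD (x y : F) : conjq (p ^ m) (x + y) = conjq (p ^ m) x + conjq (p ^ m) y.
  by apply: exprDn_pchar; rewrite (eq_pnat _ (pcharf_eq pF)) pnatX pnat_id.
have card_Fq : #|F| = (p ^ m * p ^ m)%N by rewrite card_F mulnn.
have q_gt1 : (1 < p ^ m)%N by rewrite -(expn0 p) ltn_exp2l ?prime_gt1.
have two_neq0 : (2%:R : F) != 0.
  by rewrite -(dvdn_pcharf pF) (dvdn_prime2 p_pr) //; apply: contraTneq p_odd => ->.
split=> [[y yGF y2]|no_root E].
  split=> [||s c cGF _].
  - exact: (card_common_tangents conjqD card_Fq q_gt1 two_neq0 aGF bGF a0 b0 ab yGF y2).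
  - exact: (common_tangent_is_circle1 card_Fq q_gt1 two_neq0 ab).
  - exact: (common_tangent_ratio conjqD card_Fq q_gt1 two_neq0 a0 b0 cGF).
apply/negP => /(common_tangent_square conjqD card_Fq q_gt1 two_neq0 aGF bGF a0 b0 ab).
exact: no_root.
Qed.
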